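(* Let $\langle X,\leq\rangle$ be a countable dense linear order without endpoints, let $\Gamma$ be its automorphism group acting by application, and let $I$ be the ideal of subsets of $X$ that are well-ordered by $\leq$. Then $\Gamma\curvearrowright X, I$ is $\sigma$-complete.
   Context: For a group $\Gamma$ acting on $X$, an invariant ideal $I$ on $X$ and $a\subseteq X$, $\mathrm{pstab}(a)=\{\gamma\in\Gamma:\gamma\cdot x=x\ \forall x\in a\}$ and $\gamma\cdot b=\{\gamma\cdot x:x\in b\}$. The dynamical ideal is $\sigma$-complete if for every $a\in I$ and every sequence $\langle b_n:n\in\omega\rangle$ of sets in $I$ there are $\gamma_n\in\mathrm{pstab}(a)$ with $\bigcup_n\gamma_n\cdot b_n\in I$. *)

Set Implicit Arguments.

Section Defs.
Variable X : Type.

Definition strict (le : X -> X -> Prop) (x y : X) : Prop := le x y /\ x <> y.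

Definition linear_order (le : X -> X -> Prop) : Prop :=
  (forall x, le x x) /\
  (forall x y, le x y -> le y x -> x = y) /\
  (forall x y z, le x y -> le y z -> le x z) /\
  (forall x y, le x y \/ le y x).

Definition dense_no_endpoints (le : X -> X -> Prop) : Prop :=
  (forall x y, strict le x y -> exists z, strict le x z /\ strict le z y) /\
  (forall x, exists y, strict le y x) /\
  (forall x, exists y, strict le x y).

Definition countable_type : Prop := exists f : X -> nat, forall x y, f x = f y -> x = y.

Definition order_automorphism (le : X -> X -> Prop) (g : X -> X) : Prop :=
  (exists h : X -> X, (forall x, h (g x) = x) /\ (forall y, g (h y) = y)) /\
  (forall x y, le x y <-> le (g x) (g y)).

Definition well_ordered_set (le : X -> X -> Prop) (a : X -> Prop) : Prop :=
  forall s : X -> Prop, (forall x, s x -> a x) -> (exists x, s x) ->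
    exists m, s m /\ forall y, s y -> le m y.

Definition pstab (Gam : (X -> X) -> Prop) (a : X -> Prop) (g : X -> X) : Prop :=
  Gam g /\ forall x, a x -> g x = x.

Definition act_image (g : X -> X) (b : X -> Prop) : X -> Prop :=
  fun y => exists x, b x /\ y = g x.

Definition sigma_complete (Gam : (X -> X) -> Prop) (I : (X -> Prop) -> Prop) : Prop :=
  forall a : X -> Prop, I a ->
  forall b : nat -> X -> Prop, (forall n, I (b n)) ->
  exists gam : nat -> X -> X,
    (forall n, pstab Gam a (gam n)) /\
    I (fun y => exists n, act_image (gam n) (b n) y).

End Defs.

From Stdlib Require Import List Classical ClassicalEpsilon FunctionalExtensionality
  PropExtensionality Lia.
Import ListNotations.

(* Cut [X] into classes of points having the same cut in the well-ordered set [a].  Each class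
   is an interval whose only possible point of [a] is its greatest element; without that point
   and a possible least point it is a countable dense order without endpoints, hence homogeneous
   by back-and-forth.  On such a class [D] an automorphism pushes the [n]-th set [b n] above the
   [n]-th term of a cofinal sequence of [D], so the union of the images meets each initial segment
   of [D] in a finite union of well-ordered sets.  Gluing these automorphisms with the identity
   elsewhere fixes [a] pointwise, and a set meeting every class in a well-ordered set is
   well-ordered because the classes are indexed by the well-ordered set [a]. *)

Lemma exists_max_in_list {A : Type} (r : A -> A -> Prop)
    (r_total : forall x y, r x y \/ r y x) (r_trans : forall x y z, r x y -> r y z -> r x z)
    (l : list A) (Q : A -> Prop) :
  (forall x, In x l -> ~ Q x) \/
  exists m, In m l /\ Q m /\ forall x, In x l -> Q x -> r x m.
Proof.
  induction l as [|h l IH]; [left; intros x []|].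
  assert (r_refl : forall x, r x x) by (intro x; destruct (r_total x x); auto).
  destruct (classic (Q h)) as [Qh|nQh], IH as [IH|[m [Hm [Qm Mm]]]].
  - right. exists h. split; [left; reflexivity|split; [exact Qh|]].
    intros x [<-|Hx] Qx; [apply r_refl|exfalso; exact (IH x Hx Qx)].
  - right. destruct (r_total h m) as [Hhm|Hmh].
    + exists m. split; [right; exact Hm|split; [exact Qm|]].
      intros x [<-|Hx] Qx; auto.
    + exists h. split; [left; reflexivity|split; [exact Qh|]].
      intros x [<-|Hx] Qx; [apply r_refl|eauto].
  - left. intros x [<-|Hx]; auto.
  - right. exists m. split; [right; exact Hm|split; [exact Qm|]].
    intros x [<-|Hx] Qx; [contradiction|auto].
Qed.

Section Order.
Variable X : Type.
Variable le : X -> X -> Prop.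
Hypothesis le_linear : linear_order le.
Hypothesis le_dense : dense_no_endpoints le.
Hypothesis X_countable : countable_type X.

Notation lt := (strict le).
Notation wo := (well_ordered_set le).

Lemma le_refl x : le x x. Proof. apply le_linear. Qed.
Lemma le_antisym x y : le x y -> le y x -> x = y. Proof. apply le_linear. Qed.
Lemma le_trans x y z : le x y -> le y z -> le x z. Proof. apply le_linear. Qed.
Lemma le_total x y : le x y \/ le y x. Proof. apply le_linear. Qed.

Lemma lt_not_le x y : lt x y -> ~ le y x.
Proof. intros [Hxy Hne] Hyx. apply Hne, le_antisym; assumption. Qed.

Lemma lt_le_trans x y z : lt x y -> le y z -> lt x z.
Proof.
  intros [Hxy Hne] Hyz. split; [exact (le_trans _ _ _ Hxy Hyz)|].
  intros ->. apply Hne, le_antisym; assumption.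
Qed.

Lemma le_lt_trans x y z : le x y -> lt y z -> lt x z.
Proof.
  intros Hxy [Hyz Hne]. split; [exact (le_trans _ _ _ Hxy Hyz)|].
  intros ->. apply Hne, le_antisym; assumption.
Qed.

Lemma lt_total x y : x <> y -> lt x y \/ lt y x.
Proof. intro H. destruct (le_total x y); [left|right]; split; auto. Qed.

Lemma wo_sub A B : wo A -> (forall x, B x -> A x) -> wo B.
Proof. intros HA HBA s Hs Hne. apply HA; auto. Qed.

Lemma wo_of_subsingleton A : (forall x y, A x -> A y -> x = y) -> wo A.
Proof.
  intros H s Hs [x sx]. exists x. split; [exact sx|].
  intros y sy. rewrite (H x y (Hs x sx) (Hs y sy)). apply le_refl.
Qed.

Lemma wo_union A B : wo A -> wo B -> wo (fun x => A x \/ B x).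
Proof.
  intros HA HB s Hs [x0 sx0].
  assert (HsA := HA (fun x => s x /\ A x) (fun x h => proj2 h)).
  assert (HsB := HB (fun x => s x /\ B x) (fun x h => proj2 h)).
  destruct (classic (exists x, s x /\ A x)) as [nA|nA];
  destruct (classic (exists x, s x /\ B x)) as [nB|nB].
  - destruct (HsA nA) as [ma [[sa _] Ma]], (HsB nB) as [mb [[sb _] Mb]].
    destruct (le_total ma mb) as [Hab|Hab]; [exists ma|exists mb];
      split; auto; intros y sy; destruct (Hs y sy);
      eauto using le_trans.
  - destruct (HsA nA) as [ma [[sa _] Ma]]. exists ma. split; [exact sa|].
    intros y sy. destruct (Hs y sy); [auto|exfalso; eauto].
  - destruct (HsB nB) as [mb [[sb _] Mb]]. exists mb. split; [exact sb|].
    intros y sy. destruct (Hs y sy); [exfalso; eauto|auto].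
  - exfalso. destruct (Hs x0 sx0); eauto.
Qed.

Lemma wo_monotone_image (D b : X -> Prop) (f : X -> X) :
  (forall x y, D x -> D y -> le x y -> le (f x) (f y)) -> wo b ->
  wo (fun y => exists x, b x /\ D x /\ y = f x).
Proof.
  intros Hf Hb s Hs [y0 sy0].
  destruct (Hs y0 sy0) as [x0 [bx0 [Dx0 ->]]].
  destruct (Hb (fun x => b x /\ D x /\ s (f x)) (fun x h => proj1 h)) as [m [[bm [Dm sm]] Mm]];
    [exists x0; auto|].
  exists (f m). split; [exact sm|].
  intros y sy. destruct (Hs y sy) as [x [bx [Dx ->]]]. apply Hf; auto.
Qed.

Lemma wo_finite_union (U : nat -> X -> Prop) N :
  (forall n, wo (U n)) -> wo (fun y => exists n, n < N /\ U n y).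
Proof.
  intro HU. induction N as [|N IH].
  - apply wo_of_subsingleton. intros x y [n [Hn _]]. lia.
  - apply (wo_sub _ _ (wo_union _ _ IH (HU N))).
    intros y [n [Hn Uy]]. destruct (PeanoNat.Nat.eq_dec n N) as [->|Hne]; [right; exact Uy|].
    left. exists n. split; [lia|exact Uy].
Qed.

(* Only the finitely many pieces that reach below [y] matter for the least element below [y]. *)
Lemma wo_locally_finite_union (U : nat -> X -> Prop) :
  (forall n, wo (U n)) ->
  (forall y, (exists n, U n y) -> exists N, forall n x, N <= n -> U n x -> lt y x) ->
  wo (fun y => exists n, U n y).
Proof.
  intros HU Hfin s Hs [s0 ss0].
  destruct (Hfin s0 (Hs s0 ss0)) as [N HN].
  destruct (wo_finite_union U N HU (fun y => s y /\ le y s0)) as [m [[sm _] Mm]].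
  - intros y [sy Hys0]. destruct (Hs y sy) as [n Uny]. exists n. split; [|exact Uny].
    destruct (PeanoNat.Nat.lt_ge_cases n N) as [|HNn]; [assumption|].
    exfalso. exact (lt_not_le _ _ (HN n y HNn Uny) Hys0).
  - exists s0. split; [exact ss0|apply le_refl].
  - exists m. split; [exact sm|]. intros y sy.
    destruct (le_total y s0) as [Hys0|Hs0y]; [apply Mm; split; auto|].
    exact (le_trans _ _ _ (Mm s0 (conj ss0 (le_refl s0))) Hs0y).
Qed.


Definition dense_no_endpoints_on (D : X -> Prop) : Prop :=
  (forall x y, D x -> D y -> lt x y -> exists z, D z /\ lt x z /\ lt z y) /\
  (forall x, D x -> exists y, D y /\ lt y x) /\
  (forall x, D x -> exists y, D y /\ lt x y).

Definition automorphism_on (D : X -> Prop) (f : X -> X) : Prop :=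
  (forall x, D x -> D (f x)) /\
  (forall x y, D x -> D y -> (le x y <-> le (f x) (f y))) /\
  (forall y, D y -> exists x, D x /\ f x = y).

Lemma automorphism_on_id D : automorphism_on D (fun x => x).
Proof. split; [|split]; [auto|tauto|]. intros y Dy. exists y; auto. Qed.

Definition partial_iso (L : list (X * X)) : Prop :=
  forall p p', In p L -> In p' L -> (le (fst p) (fst p') <-> le (snd p) (snd p')).

Definition pairs_in (D : X -> Prop) (L : list (X * X)) : Prop :=
  forall p, In p L -> D (fst p) /\ D (snd p).

Lemma partial_iso_incl L L' : partial_iso L -> incl L' L -> partial_iso L'.
Proof. intros HL Hincl p p' Hp Hp'. apply HL; auto. Qed.

Lemma partial_iso_lt L p p' : partial_iso L -> In p L -> In p' L ->
  lt (fst p) (fst p') -> lt (snd p) (snd p').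
Proof.
  intros HL Hp Hp' Hlt. split; [apply (HL p p' Hp Hp'), Hlt|].
  intro E. apply (lt_not_le _ _ Hlt), (HL p' p Hp' Hp). rewrite E. apply le_refl.
Qed.

Lemma partial_iso_extend L x y : partial_iso L -> (forall p, In p L -> fst p <> x) ->
  (forall p, In p L -> lt (fst p) x -> lt (snd p) y) ->
  (forall p, In p L -> lt x (fst p) -> lt y (snd p)) ->
  partial_iso ((x, y) :: L).
Proof.
  intros HL Hnew Hbelow Habove.
  assert (Hcross : forall p, In p L ->
            (le x (fst p) <-> le y (snd p)) /\ (le (fst p) x <-> le (snd p) y)).
  { intros p Hp. destruct (lt_total _ _ (Hnew p Hp)) as [Hlt|Hlt].
    - specialize (Hbelow p Hp Hlt).
      split; split; intro H; solve [apply Hlt | apply Hbelow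
        | exfalso; exact (lt_not_le _ _ Hlt H) | exfalso; exact (lt_not_le _ _ Hbelow H)].
    - specialize (Habove p Hp Hlt).
      split; split; intro H; solve [apply Hlt | apply Habove
        | exfalso; exact (lt_not_le _ _ Hlt H) | exfalso; exact (lt_not_le _ _ Habove H)]. }
  intros p p' [<-|Hp] [<-|Hp']; simpl.
  - split; intros; apply le_refl.
  - apply Hcross; exact Hp'.
  - apply Hcross; exact Hp.
  - apply HL; assumption.
Qed.

Lemma forth D L x : dense_no_endpoints_on D -> partial_iso L -> pairs_in D L -> D x ->
  exists y, D y /\ partial_iso ((x, y) :: L).
Proof.
  intros [D_dense [D_nomin D_nomax]] HL HLD Dx.
  destruct (classic (exists y, In (x, y) L)) as [[y Hy]|Hnew].
  { exists y. split; [exact (proj2 (HLD _ Hy))|].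
    apply (partial_iso_incl L); [exact HL|]. intros p [<-|Hp]; auto. }
  assert (Hgood : forall y, D y ->
            (forall p, In p L -> lt (fst p) x -> lt (snd p) y) ->
            (forall p, In p L -> lt x (fst p) -> lt y (snd p)) ->
            exists y, D y /\ partial_iso ((x, y) :: L)).
  { intros y Dy Hbelow Habove. exists y. split; [exact Dy|].
    apply partial_iso_extend; auto.
    intros [u v] Hp E. simpl in E. subst u. apply Hnew. exists v. exact Hp. }
  destruct (exists_max_in_list (fun p q => le (snd p) (snd q))
              (fun p q => le_total (snd p) (snd q)) (fun p q r => le_trans (snd p) (snd q) (snd r))
              L (fun p => lt (fst p) x)) as [Hnone1|[m1 [Hm1 [Q1 M1]]]];
  destruct (exists_max_in_list (fun p q => le (snd q) (snd p))
              (fun p q => le_total (snd q) (snd p)) (fun p q r H1 H2 => le_trans _ _ _ H2 H1)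
              L (fun p => lt x (fst p))) as [Hnone2|[m2 [Hm2 [Q2 M2]]]].
  - apply (Hgood x Dx); intros p Hp Q; exfalso; [exact (Hnone1 p Hp Q)|exact (Hnone2 p Hp Q)].
  - destruct (D_nomin (snd m2) (proj2 (HLD _ Hm2))) as [y [Dy Hy]].
    apply (Hgood y Dy); intros p Hp Q; [exfalso; exact (Hnone1 p Hp Q)|].
    exact (lt_le_trans _ _ _ Hy (M2 p Hp Q)).
  - destruct (D_nomax (snd m1) (proj2 (HLD _ Hm1))) as [y [Dy Hy]].
    apply (Hgood y Dy); intros p Hp Q; [|exfalso; exact (Hnone2 p Hp Q)].
    exact (le_lt_trans _ _ _ (M1 p Hp Q) Hy).
  - assert (Hm12 : lt (snd m1) (snd m2)).
    { apply (partial_iso_lt L); auto. apply (lt_le_trans _ x); [exact Q1|apply Q2]. }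
    destruct (D_dense _ _ (proj2 (HLD _ Hm1)) (proj2 (HLD _ Hm2)) Hm12)
      as [y [Dy [Hy1 Hy2]]].
    apply (Hgood y Dy); intros p Hp Q.
    + exact (le_lt_trans _ _ _ (M1 p Hp Q) Hy1).
    + exact (lt_le_trans _ _ _ Hy2 (M2 p Hp Q)).
Qed.

Definition swap_pairs (L : list (X * X)) : list (X * X) := map (fun p => (snd p, fst p)) L.

Lemma partial_iso_swap L : partial_iso L <-> partial_iso (swap_pairs L).
Proof.
  unfold swap_pairs. split; intros HL p p' Hp Hp'.
  - apply in_map_iff in Hp as [q [<- Hq]], Hp' as [q' [<- Hq']].
    symmetry. apply HL; assumption.
  - symmetry. apply (HL (snd p, fst p) (snd p', fst p')); apply in_map_iff; eauto.
Qed.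

Lemma pairs_in_swap D L : pairs_in D L -> pairs_in D (swap_pairs L).
Proof.
  intros HL p Hp. apply in_map_iff in Hp as [q [<- Hq]]. simpl. destruct (HL q Hq); auto.
Qed.

Lemma back D L y : dense_no_endpoints_on D -> partial_iso L -> pairs_in D L -> D y ->
  exists x, D x /\ partial_iso ((x, y) :: L).
Proof.
  intros HD HL HLD Dy.
  destruct (forth D (swap_pairs L) y HD (proj1 (partial_iso_swap L) HL) (pairs_in_swap D L HLD) Dy)
    as [x [Dx Hx]].
  exists x. split; [exact Dx|]. apply partial_iso_swap. exact Hx.
Qed.

Lemma automorphism_of_chain D (L : nat -> list (X * X)) :
  (forall n, partial_iso (L n) /\ pairs_in D (L n)) ->
  (forall n, incl (L n) (L (S n))) ->
  (forall x, D x -> exists n y, In (x, y) (L n)) ->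
  (forall y, D y -> exists n x, In (x, y) (L n)) ->
  exists g, automorphism_on D g /\ forall n x y, In (x, y) (L n) -> g x = y.
Proof.
  intros Hgood Hincl Hdom Hran.
  assert (Hmono : forall n m, n <= m -> incl (L n) (L m)).
  { induction 1; [apply incl_refl|eapply incl_tran; eauto]. }
  pose (G := fun x y => exists n, In (x, y) (L n)).
  assert (Hcompat : forall x y x' y', G x y -> G x' y' -> (le x x' <-> le y y')).
  { intros x y x' y' [n Hn] [n' Hn'].
    apply (proj1 (Hgood (max n n')) (x, y) (x', y'));
      [apply (Hmono n)|apply (Hmono n')]; (lia || assumption). }
  assert (Hfun : forall x y y', G x y -> G x y' -> y = y').
  { intros x y y' H H'. apply le_antisym; apply (Hcompat x _ x); auto; apply le_refl. }
  assert (HGD : forall x y, G x y -> D x /\ D y).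
  { intros x y [n Hn]. exact (proj2 (Hgood n) _ Hn). }
  destruct (choice (fun x y => (exists y, G x y) -> G x y)) as [g Hg].
  { intro x. destruct (classic (exists y, G x y)) as [[y Hy]|Hnone]; [exists y; auto|].
    exists x. intro H; contradiction. }
  assert (HgG : forall x, D x -> G x (g x)).
  { intros x Dx. apply Hg. destruct (Hdom x Dx) as [n [y Hy]]. exists y, n. exact Hy. }
  exists g. split; [split; [|split]|].
  - intros x Dx. exact (proj2 (HGD _ _ (HgG x Dx))).
  - intros x y Dx Dy. apply Hcompat; auto.
  - intros y Dy. destruct (Hran y Dy) as [n [x Hx]].
    assert (Dx : D x) by exact (proj1 (HGD x y (ex_intro _ n Hx))).
    exists x. split; [exact Dx|]. apply (Hfun x); [apply HgG; exact Dx|exists n; exact Hx].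
  - intros n x y Hxy. assert (Dx : D x) by exact (proj1 (HGD x y (ex_intro _ n Hxy))).
    apply (Hfun x); [apply HgG; exact Dx|exists n; exact Hxy].
Qed.

Lemma extend_to_cover D (code : X -> nat) L k :
  dense_no_endpoints_on D -> (forall x y, code x = code y -> x = y) ->
  partial_iso L -> pairs_in D L ->
  exists L', partial_iso L' /\ pairs_in D L' /\ incl L L' /\
    forall x, D x -> code x = k -> (exists y, In (x, y) L') /\ (exists y, In (y, x) L').
Proof.
  intros HD Hcode HL HLD.
  destruct (classic (exists x, D x /\ code x = k)) as [[x [Dx Hk]]|Hnone].
  - destruct (forth D L x HD HL HLD Dx) as [y [Dy HL1]].
    assert (HLD1 : pairs_in D ((x, y) :: L)) by (intros p [<-|Hp]; auto).
    destruct (back D _ x HD HL1 HLD1 Dx) as [z [Dz HL2]].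
    exists ((z, x) :: (x, y) :: L). split; [exact HL2|split; [|split]].
    + intros p [<-|Hp]; auto.
    + intros p Hp. right; right; exact Hp.
    + intros x' _ Hk'. rewrite <- Hk in Hk'. apply Hcode in Hk'. subst x'.
      split; [exists y; right; left|exists z; left]; reflexivity.
  - exists L. split; [exact HL|split; [exact HLD|split; [apply incl_refl|]]].
    intros x Dx Hk. exfalso. apply Hnone. exists x; auto.
Qed.

Lemma dense_on_homogeneous D p q : dense_no_endpoints_on D -> D p -> D q ->
  exists g, automorphism_on D g /\ g p = q.
Proof.
  intros HD Dp Dq. destruct X_countable as [code Hcode].
  destruct (choice (fun (Lk : list (X * X) * nat) L' =>
      partial_iso (fst Lk) -> pairs_in D (fst Lk) ->
      partial_iso L' /\ pairs_in D L' /\ incl (fst Lk) L' /\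
      forall x, D x -> code x = snd Lk -> (exists y, In (x, y) L') /\ (exists y, In (y, x) L')))
    as [ext Hext].
  { intros [L k]. destruct (classic (partial_iso L /\ pairs_in D L)) as [[HL HLD]|Hbad].
    - destruct (extend_to_cover D code L k HD Hcode HL HLD) as [L' HL']. exists L'; auto.
    - exists L. intros HL HLD. exfalso. auto. }
  pose (chain := fix chain n := match n with 0 => [(p, q)] | S n => ext (chain n, n) end).
  assert (Hgood : forall n, partial_iso (chain n) /\ pairs_in D (chain n)).
  { induction n as [|n [HL HLD]].
    - split; [intros p1 p2 [<-|[]] [<-|[]]; simpl; split; intros; apply le_refl|intros p1 [<-|[]]; simpl; auto].
    - destruct (Hext (chain n, n) HL HLD) as [HL' [HLD' _]]. split; assumption. }
  assert (Hcover : forall x, D x ->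
            (exists y, In (x, y) (chain (S (code x)))) /\ (exists y, In (y, x) (chain (S (code x))))).
  { intros x Dx. apply (Hext (chain (code x), code x)); try apply Hgood; auto. }
  destruct (automorphism_of_chain D chain Hgood) as [g [Hg Hgchain]].
  - intro n. apply (Hext (chain n, n)); apply Hgood.
  - intros x Dx. exists (S (code x)). apply Hcover; exact Dx.
  - intros y Dy. exists (S (code y)). apply Hcover; exact Dy.
  - exists g. split; [exact Hg|]. apply (Hgchain 0). left; reflexivity.
Qed.

Lemma upper_bound_on D x y : dense_no_endpoints_on D -> D x -> D y ->
  exists z, D z /\ lt x z /\ lt y z.
Proof.
  intros [_ [_ D_nomax]] Dx Dy. destruct (le_total x y) as [Hxy|Hyx].
  - destruct (D_nomax y Dy) as [z [Dz Hyz]]. exists z. eauto using le_lt_trans.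
  - destruct (D_nomax x Dx) as [z [Dz Hxz]]. exists z. eauto using le_lt_trans.
Qed.

Lemma cofinal_chain D : dense_no_endpoints_on D -> (exists x, D x) ->
  exists c : nat -> X, (forall k, D (c k)) /\ (forall i j, i <= j -> le (c i) (c j)) /\
    (forall x, D x -> exists k, lt x (c k)).
Proof.
  intros HD [d0 Dd0]. destruct X_countable as [code Hcode].
  destruct (choice (fun (ck : X * nat) y => D (fst ck) ->
      D y /\ lt (fst ck) y /\ forall x, D x -> code x = snd ck -> lt x y)) as [next Hnext].
  { intros [c k]. simpl. destruct (classic (D c)) as [Dc|nDc]; [|exists c; contradiction].
    destruct (classic (exists x, D x /\ code x = k)) as [[x [Dx Hk]]|Hnone].
    - destruct (upper_bound_on D c x HD Dc Dx) as [z [Dz [Hcz Hxz]]].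
      exists z. intros _. split; [exact Dz|split; [exact Hcz|]].
      intros x' _ Hk'. rewrite <- Hk in Hk'. apply Hcode in Hk'. subst x'. exact Hxz.
    - destruct (upper_bound_on D c c HD Dc Dc) as [z [Dz [Hcz _]]].
      exists z. intros _. split; [exact Dz|split; [exact Hcz|]].
      intros x Dx Hk. exfalso. eauto. }
  pose (c := fix c k := match k with 0 => d0 | S k => next (c k, k) end).
  assert (Dc : forall k, D (c k)).
  { induction k; [exact Dd0|exact (proj1 (Hnext (c k, k) IHk))]. }
  exists c. split; [exact Dc|split].
  - induction 1; [apply le_refl|].
    exact (le_trans _ _ _ IHle (proj1 (proj1 (proj2 (Hnext (c m, m) (Dc m)))))).
  - intros x Dx. exists (S (code x)).
    exact (proj2 (proj2 (Hnext (c (code x), code x) (Dc _))) x Dx eq_refl).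
Qed.

Lemma shift_above D b p : dense_no_endpoints_on D -> wo b -> D p ->
  exists f, automorphism_on D f /\ forall x, b x -> D x -> le p (f x).
Proof.
  intros HD Hb Dp. destruct (classic (exists x, b x /\ D x)) as [Hne|Hnone].
  - destruct (Hb (fun x => b x /\ D x) (fun x h => proj1 h) Hne) as [m [[bm Dm] Mm]].
    destruct (dense_on_homogeneous D m p HD Dm Dp) as [f [Hf <-]].
    exists f. split; [exact Hf|]. intros x bx Dx.
    apply (proj1 (proj2 Hf) m x Dm Dx), Mm. split; assumption.
  - exists (fun x => x). split; [apply automorphism_on_id|].
    intros x bx Dx. exfalso. eauto.
Qed.

Definition shifted_union (b : nat -> X -> Prop) (D : X -> Prop) (F : nat -> X -> X) : X -> Prop :=
  fun y => exists n x, b n x /\ D x /\ y = F n x.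

Lemma dense_on_sigma_complete D b : dense_no_endpoints_on D -> (exists x, D x) ->
  (forall n, wo (b n)) ->
  exists F, (forall n, automorphism_on D (F n)) /\ wo (shifted_union b D F).
Proof.
  intros HD Hne Hb. destruct (cofinal_chain D HD Hne) as [c [Dc [c_mono c_cofinal]]].
  destruct (choice (fun n f => automorphism_on D f /\ forall x, b n x -> D x -> le (c n) (f x)))
    as [F HF].
  { intro n. exact (shift_above D (b n) (c n) HD (Hb n) (Dc n)). }
  exists F. split; [intro n; apply HF|].
  apply (wo_locally_finite_union (fun n y => exists x, b n x /\ D x /\ y = F n x)).
  - intro n. apply wo_monotone_image; [|exact (Hb n)].
    intros x y Dx Dy. apply (proj1 (proj2 (proj1 (HF n))) x y Dx Dy).
  - intros y [n0 [x0 [_ [Dx0 ->]]]].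
    destruct (c_cofinal (F n0 x0) (proj1 (proj1 (HF n0)) x0 Dx0)) as [N HN].
    exists N. intros n x HNn [x' [bx' [Dx' ->]]].
    exact (lt_le_trans _ _ _ HN (le_trans _ _ _ (c_mono N n HNn) (proj2 (HF n) x' bx' Dx'))).
Qed.

Definition class_shift (b : nat -> X -> Prop) (D : X -> Prop) : nat -> X -> X :=
  epsilon (inhabits (fun (_ : nat) (x : X) => x))
    (fun F => (forall n, automorphism_on D (F n)) /\ wo (shifted_union b D F)).

Lemma class_shift_spec b D : dense_no_endpoints_on D -> (exists x, D x) ->
  (forall n, wo (b n)) ->
  (forall n, automorphism_on D (class_shift b D n)) /\ wo (shifted_union b D (class_shift b D)).
Proof.
  intros HD Hne Hb.
  exact (epsilon_spec _ (fun F => (forall n, automorphism_on D (F n)) /\ wo (shifted_union b D F))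
           (dense_on_sigma_complete D b HD Hne Hb)).
Qed.

Section Cuts.
Variable a : X -> Prop.
Hypothesis a_wo : wo a.

Definition same_cut x y : Prop := forall z, a z -> (le x z <-> le y z).

Definition inner x : Prop := ~ a x /\ exists u, lt u x /\ same_cut u x.

Definition cut_class x : X -> Prop := fun y => inner y /\ same_cut x y.

Lemma same_cut_refl x : same_cut x x.
Proof. intros z _. reflexivity. Qed.

Lemma same_cut_sym x y : same_cut x y -> same_cut y x.
Proof. intros H z Az. symmetry. apply H, Az. Qed.

Lemma same_cut_trans x y w : same_cut x y -> same_cut y w -> same_cut x w.
Proof. intros Hxy Hyw z Az. rewrite (Hxy z Az). apply Hyw, Az. Qed.

Lemma same_cut_convex x w y : le x w -> le w y -> same_cut x y -> same_cut x w.
Proof.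
  intros Hxw Hwy Hxy z Az. split; intro H.
  - apply (le_trans _ y _ Hwy), Hxy; assumption.
  - exact (le_trans _ _ _ Hxw H).
Qed.

Lemma le_across_cuts_impl x y x' y' : ~ same_cut x y -> same_cut x x' -> same_cut y y' ->
  le x y -> le x' y'.
Proof.
  intros Hn Hxx' Hyy' Hxy. destruct (le_total x' y') as [|Hy'x']; [assumption|].
  exfalso. apply Hn. destruct (le_total y' x) as [Hy'x|Hxy'].
  - apply (same_cut_trans _ y'); [|exact (same_cut_sym _ _ Hyy')].
    apply same_cut_sym, (same_cut_convex y' x y); [exact Hy'x|exact Hxy|].
    exact (same_cut_sym _ _ Hyy').
  - apply (same_cut_trans _ y'); [|exact (same_cut_sym _ _ Hyy')].
    exact (same_cut_convex x y' x' Hxy' Hy'x' Hxx').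
Qed.

Lemma le_across_cuts x y x' y' : ~ same_cut x y -> same_cut x x' -> same_cut y y' ->
  (le x y <-> le x' y').
Proof.
  intros Hn Hxx' Hyy'. split; [exact (le_across_cuts_impl _ _ _ _ Hn Hxx' Hyy')|].
  apply le_across_cuts_impl; [|exact (same_cut_sym _ _ Hxx')|exact (same_cut_sym _ _ Hyy')].
  intro H. apply Hn. apply (same_cut_trans _ x'); [exact Hxx'|].
  apply (same_cut_trans _ y'); [exact H|exact (same_cut_sym _ _ Hyy')].
Qed.

Lemma same_cut_lt_not_in w y : same_cut w y -> lt w y -> ~ a w.
Proof. intros H Hlt Aw. apply (lt_not_le _ _ Hlt), (H w Aw), le_refl. Qed.

Lemma exists_above_same_cut x : ~ a x -> exists v, lt x v /\ same_cut v x /\ ~ a v.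
Proof.
  intro nAx. destruct le_dense as [X_dense [_ X_nomax]].
  destruct (classic (exists z, a z /\ le x z)) as [Habove|Hnone].
  - destruct (a_wo (fun z => a z /\ le x z) (fun z h => proj1 h) Habove) as [m [[Am Hxm] Mm]].
    assert (Hxm' : lt x m) by (split; [exact Hxm|intros ->; contradiction]).
    destruct (X_dense _ _ Hxm') as [v [Hxv Hvm]].
    exists v. split; [exact Hxv|split].
    + intros z Az. split; intro H.
      * exact (le_trans _ _ _ (proj1 Hxv) H).
      * exact (le_trans _ _ _ (proj1 Hvm) (Mm z (conj Az H))).
    + intro Av. exact (lt_not_le _ _ Hvm (Mm v (conj Av (proj1 Hxv)))).
  - destruct (X_nomax x) as [v Hxv]. exists v. split; [exact Hxv|split].
    + intros z Az. split; intro H; exfalso; apply Hnone; exists z; split; auto.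
      exact (le_trans _ _ _ (proj1 Hxv) H).
    + intro Av. apply Hnone. exists v. split; [exact Av|exact (proj1 Hxv)].
Qed.

Lemma cut_class_dense x : inner x -> dense_no_endpoints_on (cut_class x).
Proof.
  intros Ix. destruct le_dense as [X_dense _]. split; [|split].
  - intros y1 y2 [_ S1] [_ S2] H12. destruct (X_dense _ _ H12) as [w [H1w Hw2]].
    assert (S12 : same_cut y1 y2) by exact (same_cut_trans _ _ _ (same_cut_sym _ _ S1) S2).
    assert (S1w : same_cut y1 w) by exact (same_cut_convex _ _ _ (proj1 H1w) (proj1 Hw2) S12).
    exists w. split; [split|split; assumption].
    + split; [|exists y1; split; assumption].
      apply (same_cut_lt_not_in w y2); [|exact Hw2].
      exact (same_cut_trans _ _ _ (same_cut_sym _ _ S1w) S12).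
    + exact (same_cut_trans _ _ _ S1 S1w).
  - intros y [[nAy [u [Huy Suy]]] Sy]. destruct (X_dense _ _ Huy) as [w [Huw Hwy]].
    assert (Suw : same_cut u w) by exact (same_cut_convex _ _ _ (proj1 Huw) (proj1 Hwy) Suy).
    assert (Swy : same_cut w y) by exact (same_cut_trans _ _ _ (same_cut_sym _ _ Suw) Suy).
    exists w. split; [split|exact Hwy].
    + split; [exact (same_cut_lt_not_in w y Swy Hwy)|exists u; split; assumption].
    + exact (same_cut_trans _ _ _ Sy (same_cut_sym _ _ Swy)).
  - intros y [[nAy _] Sy]. destruct (exists_above_same_cut y nAy) as [v [Hyv [Svy nAv]]].
    exists v. split; [split|exact Hyv].
    + split; [exact nAv|exists y; split; [exact Hyv|exact (same_cut_sym _ _ Svy)]].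
    + exact (same_cut_trans _ _ _ Sy (same_cut_sym _ _ Svy)).
Qed.

Lemma cut_class_eq x y : same_cut x y -> cut_class x = cut_class y.
Proof.
  intro Sxy. apply functional_extensionality. intro z. apply propositional_extensionality.
  split; intros [Iz S]; split; auto.
  - exact (same_cut_trans _ _ _ (same_cut_sym _ _ Sxy) S).
  - exact (same_cut_trans _ _ _ Sxy S).
Qed.

Lemma inner_le_boundary w y : inner w -> same_cut w y -> ~ inner y ->
  (le w y <-> a y) /\ (le y w <-> ~ a y).
Proof.
  intros Iw Swy nIy.
  assert (Hup : le w y <-> a y).
  { split; intro H.
    - apply NNPP. intro nAy. apply nIy. split; [exact nAy|exists w; split; [|exact Swy]].
      split; [exact H|intros <-; contradiction].
    - apply (Swy y H), le_refl. }
  split; [exact Hup|split].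
  - intros Hyw Ay. apply nIy. rewrite (le_antisym _ _ Hyw (proj2 Hup Ay)). exact Iw.
  - intro nAy. destruct (le_total y w) as [|Hwy]; [assumption|].
    exfalso. exact (nAy (proj1 Hup Hwy)).
Qed.

Lemma not_inner_same_cut_eq x y : same_cut x y -> ~ inner x -> ~ inner y -> (a x <-> a y) ->
  x = y.
Proof.
  assert (Hno_lt : forall u v, same_cut u v -> ~ inner v -> (a u <-> a v) -> ~ lt u v).
  { intros u v Suv nIv Huv Hlt. destruct (classic (a v)) as [Av|nAv].
    - exact (lt_not_le _ _ Hlt (proj1 (Suv u (proj2 Huv Av)) (le_refl u))).
    - apply nIv. split; [exact nAv|exists u; split; assumption]. }
  intros Sxy nIx nIy Hxy. apply NNPP. intro Hne.
  destruct (lt_total _ _ Hne) as [Hlt|Hlt].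
  - exact (Hno_lt x y Sxy nIy Hxy Hlt).
  - exact (Hno_lt y x (same_cut_sym _ _ Sxy) nIx (iff_sym Hxy) Hlt).
Qed.

(* A nonempty part [s] of [U] either reaches below some point of [a], and then its least point
   lies in the cut class of the least such point of [a], or lies entirely above [a], in one
   cut class. *)
Lemma wo_of_cut_pieces U : (forall r, wo (fun y => U y /\ same_cut r y)) -> wo U.
Proof.
  intros HU s Hs [s0 ss0].
  destruct (classic (exists z, a z /\ exists t, s t /\ le t z)) as [Hbelow|Habove].
  - destruct (a_wo _ (fun z h => proj1 h) Hbelow) as [m [[Am [t0 [st0 Ht0m]]] Mm]].
    destruct (HU m (fun t => s t /\ le t m)) as [mm [[smm Hmm] Mmm]].
    + intros t [st Htm]. split; [exact (Hs t st)|]. intros z Az. split; intro H.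
      * exact (le_trans _ _ _ Htm H).
      * apply Mm. split; [exact Az|exists t; split; assumption].
    + exists t0. split; assumption.
    + exists mm. split; [exact smm|]. intros y sy. destruct (le_total y m) as [Hym|Hmy].
      * apply Mmm. split; assumption.
      * exact (le_trans _ _ _ Hmm Hmy).
  - destruct (HU s0 s) as [mm Hmm]; [|exists s0; exact ss0|exists mm; exact Hmm].
    intros t st. split; [exact (Hs t st)|].
    intros z Az. split; intro H; exfalso; apply Habove; exists z; split; try exact Az.
    + exists s0. split; assumption.
    + exists t. split; assumption.
Qed.

Lemma automorphism_of_cut_preserving f : (forall x, same_cut x (f x)) ->
  (forall x y, same_cut x y -> (le x y <-> le (f x) (f y))) -> (forall y, exists x, f x = y) ->
  order_automorphism le f.
Proof.
  intros Hcut Hin Hsurj.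
  assert (Hle : forall x y, le x y <-> le (f x) (f y)).
  { intros x y. destruct (classic (same_cut x y)) as [Sxy|nS]; [exact (Hin x y Sxy)|].
    exact (le_across_cuts x y _ _ nS (Hcut x) (Hcut y)). }
  split; [|exact Hle].
  destruct (choice (fun y x => f x = y) Hsurj) as [h Hh].
  exists h. split; [|exact Hh].
  intro x. apply le_antisym; apply Hle; rewrite Hh; apply le_refl.
Qed.

Section Glue.
Variable b : nat -> X -> Prop.
Hypothesis b_wo : forall n, wo (b n).

Definition glued_shift (n : nat) (x : X) : X :=
  if excluded_middle_informative (inner x) then class_shift b (cut_class x) n x else x.

Lemma class_shift_cut_class x : inner x ->
  (forall n, automorphism_on (cut_class x) (class_shift b (cut_class x) n)) /\
  wo (shifted_union b (cut_class x) (class_shift b (cut_class x))).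
Proof.
  intro Ix. apply class_shift_spec; [exact (cut_class_dense x Ix)| |exact b_wo].
  exists x. split; [exact Ix|apply same_cut_refl].
Qed.

Lemma glued_shift_inner n x : inner x -> glued_shift n x = class_shift b (cut_class x) n x.
Proof. intro Ix. unfold glued_shift. destruct (excluded_middle_informative (inner x)); tauto. Qed.

Lemma glued_shift_outer n x : ~ inner x -> glued_shift n x = x.
Proof. intro nIx. unfold glued_shift. destruct (excluded_middle_informative (inner x)); tauto. Qed.

Lemma glued_shift_cut_class n x : inner x -> cut_class x (glued_shift n x).
Proof.
  intro Ix. rewrite (glued_shift_inner n x Ix).
  apply (proj1 (class_shift_cut_class x Ix) n). split; [exact Ix|apply same_cut_refl].
Qed.

Lemma glued_shift_same_cut n x : same_cut x (glued_shift n x).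
Proof.
  destruct (classic (inner x)) as [Ix|nIx]; [exact (proj2 (glued_shift_cut_class n x Ix))|].
  rewrite (glued_shift_outer n x nIx). apply same_cut_refl.
Qed.

Lemma glued_shift_le_same_cut n x y : same_cut x y ->
  (le x y <-> le (glued_shift n x) (glued_shift n y)).
Proof.
  intro Sxy. destruct (classic (inner x)) as [Ix|nIx], (classic (inner y)) as [Iy|nIy].
  - rewrite (glued_shift_inner n x Ix), (glued_shift_inner n y Iy), <- (cut_class_eq x y Sxy).
    apply (proj1 (class_shift_cut_class x Ix) n); split; auto using same_cut_refl.
  - destruct (glued_shift_cut_class n x Ix) as [Igx Sxgx].
    rewrite (glued_shift_outer n y nIy), (proj1 (inner_le_boundary x y Ix Sxy nIy)).
    symmetry. apply (inner_le_boundary _ y Igx); [|exact nIy].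
    exact (same_cut_trans _ _ _ (same_cut_sym _ _ Sxgx) Sxy).
  - destruct (glued_shift_cut_class n y Iy) as [Igy Sygy].
    rewrite (glued_shift_outer n x nIx), (proj2 (inner_le_boundary y x Iy (same_cut_sym _ _ Sxy) nIx)).
    symmetry. apply (inner_le_boundary _ x Igy); [|exact nIx].
    exact (same_cut_trans _ _ _ (same_cut_sym _ _ Sygy) (same_cut_sym _ _ Sxy)).
  - rewrite (glued_shift_outer n x nIx), (glued_shift_outer n y nIy). reflexivity.
Qed.

Lemma glued_shift_surjective n y : exists x, glued_shift n x = y.
Proof.
  destruct (classic (inner y)) as [Iy|nIy]; [|exists y; exact (glued_shift_outer n y nIy)].
  destruct (proj2 (proj2 (proj1 (class_shift_cut_class y Iy) n)) y
              (conj Iy (same_cut_refl y))) as [x [[Ix Syx] Hx]].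
  exists x. rewrite (glued_shift_inner n x Ix), (cut_class_eq x y (same_cut_sym _ _ Syx)).
  exact Hx.
Qed.

Lemma glued_shift_automorphism n : order_automorphism le (glued_shift n).
Proof.
  apply automorphism_of_cut_preserving.
  - exact (glued_shift_same_cut n).
  - exact (glued_shift_le_same_cut n).
  - exact (glued_shift_surjective n).
Qed.

(* Within a cut class only the point of [a] and the least point can be non-inner; the inner
   points of the union all come from the single class shift of that class. *)
Lemma glued_union_cut_wo r :
  wo (fun y => (exists n, act_image (glued_shift n) (b n) y) /\ same_cut r y).
Proof.
  pose (U := fun y => exists n, act_image (glued_shift n) (b n) y).
  assert (Hboundary : forall P : Prop, wo (fun y => ~ inner y /\ (a y <-> P) /\ same_cut r y)).
  { intro P. apply wo_of_subsingleton. intros y1 y2 [nI1 [A1 S1]] [nI2 [A2 S2]].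
    apply not_inner_same_cut_eq; [exact (same_cut_trans _ _ _ (same_cut_sym _ _ S1) S2)
                                 |exact nI1|exact nI2|].
    rewrite A1, A2. reflexivity. }
  assert (Hinner : wo (fun y => inner y /\ same_cut r y /\ U y)).
  { destruct (classic (exists y0, inner y0 /\ same_cut r y0 /\ U y0)) as [[y0 [I0 [S0 _]]]|Hnone].
    2: { apply wo_of_subsingleton. intros y1 y2 H1. exfalso. eauto. }
    apply (wo_sub _ _ (proj2 (class_shift_cut_class y0 I0))).
    intros y [Iy [Sy [n [x [bx Hyx]]]]].
    assert (Ix : inner x).
    { apply NNPP. intro nIx. rewrite (glued_shift_outer n x nIx) in Hyx. subst y. contradiction. }
    assert (Sy0x : same_cut y0 x).
    { apply (same_cut_trans _ y); [exact (same_cut_trans _ _ _ (same_cut_sym _ _ S0) Sy)|].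
      rewrite Hyx. apply same_cut_sym, glued_shift_same_cut. }
    exists n, x. split; [exact bx|split; [split; assumption|]].
    rewrite Hyx, (glued_shift_inner n x Ix), (cut_class_eq x y0 (same_cut_sym _ _ Sy0x)).
    reflexivity. }
  apply (wo_sub _ _ (wo_union _ _ (wo_union _ _ (Hboundary True) (Hboundary False)) Hinner)).
  intros y [Uy Sy]. destruct (classic (inner y)) as [Iy|nIy]; [right; auto|left].
  destruct (classic (a y)) as [Ay|nAy]; [left|right]; (split; [exact nIy|split; [tauto|exact Sy]]).
Qed.

End Glue.
End Cuts.
End Order.

Theorem mainTheorem12 (X : Type) (le : X -> X -> Prop) :
  linear_order le -> dense_no_endpoints le -> countable_type X ->
  sigma_complete (order_automorphism le) (well_ordered_set le).
Proof.
  intros le_linear le_dense X_countable a a_wo b b_wo.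
  exists (glued_shift X le a b). split.
  - intro n. split; [apply glued_shift_automorphism; assumption|].
    intros x Ax. apply glued_shift_outer. intros [nAx _]. contradiction.
  - apply (wo_of_cut_pieces X le le_linear a a_wo). intro r.
    apply glued_union_cut_wo; assumption.
Qed.
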